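(* Let $G_3$ be the graph with vertices $v_1,\dots,v_8$ and edges $a_1=v_1v_2$, $a_2=v_2v_3$, $a_3=v_3v_4$, $a_4=v_4v_5$, $a_5=v_1v_5$, $a_6=v_1v_8$, $a_7=v_2v_6$, $a_8=v_3v_6$, $a_9=v_4v_7$, $a_{10}=v_5v_8$, $a_{11}=v_6v_7$, $a_{12}=v_7v_8$. Let $\gamma_1=e_1+e_3+e_{10}+e_{11}$, $\gamma_2=e_2+e_4+e_6+e_{11}$, $\gamma_3=e_3+e_5+e_7+e_{12}$, $\gamma_4=e_2+e_5+e_6+e_7+e_8+2e_9+e_{10}$, $\gamma_5=e_2+e_3+e_5+e_6+e_7+e_9+e_{10}+e_{11}$ in $\mathbb{R}^{12}$. Then any $\gamma\in S_{\mathbb{R}}(G_3)$ can be uniquely written as $\gamma=k_1\gamma_1+k_2\gamma_2+k_3\gamma_3+k_4\gamma_4+k_5\gamma_5$ with $k_1,\dots,k_5\in\mathbb{R}$. Moreover, $\gamma\in S(G_3)$ if and only if each of the numbers $k_1,\ k_2,\ k_3,\ k_4,\ k_1+k_2+k_5,\ k_1+k_3+k_5,\ k_1+k_4+k_5,\ k_2+k_4+k_5,\ k_3+k_4+k_5,\ 2k_4+k_5$ belongs to $\mathbb{N}$. Consequently, for $\gamma\in S(G_3)$ one has $k_5\in\mathbb{Z}$.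
   Context: For a finite graph $G$ with edges $a_1,\dots,a_n$, $S_{\mathbb{R}}(G)$ is the set of vectors $(\alpha_1,\dots,\alpha_n)\in\mathbb{R}^n$ (real labels $\alpha_i$ on edges $a_i$) such that for every vertex $v$ the sum of the labels of the edges incident to $v$ is the same number $s$ for all vertices; it is a real vector space. A magic labelling is an element of $S(G)=S_{\mathbb{R}}(G)\cap\mathbb{N}^n$. $e_i$ is the $i$-th unit vector of $\mathbb{R}^n$, $\mathbb{N}=\{0,1,2,\dots\}$. *)

From HB Require Import structures.
From mathcomp Require Import all_boot all_order all_algebra.
From mathcomp Require Import reals.
Set Implicit Arguments. Unset Strict Implicit. Unset Printing Implicit Defensive.
Import Order.TTheory GRing.Theory Num.Theory.
Local Open Scope ring_scope.

(* Edges a_1..a_12 of G_3 (stored at indices 0..11), as pairs of vertex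
   numbers in 1..8 (v_1..v_8). *)
Definition G3_edges : seq (nat * nat) :=
  [:: (1,2); (2,3); (3,4); (4,5); (1,5); (1,8);
      (2,6); (3,6); (4,7); (5,8); (6,7); (7,8)]%N.

(* Vertex v : 'I_8 stands for v_(v+1); edge i : 'I_12 stands for a_(i+1). *)
Definition incident (v : 'I_8) (i : 'I_12) : bool :=
  let e := nth (0%N, 0%N) G3_edges i in (v.+1 == e.1) || (v.+1 == e.2).

Definition in_SR (R : realType) (x : 'rV[R]_12) : Prop :=
  exists s : R, forall v : 'I_8, \sum_(i < 12 | incident v i) x 0 i = s.

Definition in_S (R : realType) (x : 'rV[R]_12) : Prop :=
  in_SR x /\ forall i : 'I_12, x 0 i \is a Num.nat.

(* Coefficients of gamma_1..gamma_5 (index j : 'I_5 stands for gamma_(j+1)). *)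
Definition gamma_coeffs : seq (seq nat) :=
  [:: [:: 1; 0; 1; 0; 0; 0; 0; 0; 0; 1; 1; 0];
      [:: 0; 1; 0; 1; 0; 1; 0; 0; 0; 0; 1; 0];
      [:: 0; 0; 1; 0; 1; 0; 1; 0; 0; 0; 0; 1];
      [:: 0; 1; 0; 0; 1; 1; 1; 1; 2; 1; 0; 0];
      [:: 0; 1; 1; 0; 1; 1; 1; 0; 1; 1; 1; 0]]%N.

Definition gamma (R : realType) (j : 'I_5) : 'rV[R]_12 :=
  \row_(i < 12) (nth 0%N (nth [::] gamma_coeffs j) i)%:R.

(* k_1 gamma_1 + ... + k_5 gamma_5, with k_(j+1) = k 0 j. *)
Definition comb (R : realType) (k : 'rV[R]_5) : 'rV[R]_12 :=
  \sum_(j < 5) k 0 j *: gamma R j.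

From HB Require Import structures.
From mathcomp Require Import all_boot all_order all_algebra.
From mathcomp Require Import reals.
From mathcomp Require Import lra.
Set Implicit Arguments. Unset Strict Implicit. Unset Printing Implicit Defensive.
Import Order.TTheory GRing.Theory Num.Theory.
Local Open Scope ring_scope.

(* Solving the eight vertex equations shows that a labelling in S_R(G_3) is
   determined by a_1, a_4, a_12, a_8 and a_9, and this gives an explicit left
   inverse of k |-> k_1 gamma_1 + ... + k_5 gamma_5 which is a right inverse
   on S_R(G_3).  The twelve labels of that combination are exactly the ten
   linear forms of the statement (two of them twice), so integrality of the
   labelling means integrality of those forms; finally k_5 = a_9 - 2 a_8. *)

Lemma ord5_inord : [/\ (0 : 'I_5) = inord 0, (1 : 'I_5) = inord 1,
  (2 : 'I_5) = inord 2, (3 : 'I_5) = inord 3 & (4 : 'I_5) = inord 4].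
Proof. by split; apply/val_inj; rewrite /= inordK. Qed.

Section MagicLabellingsOfG3.

Variable R : realType.
Implicit Types (x : 'rV[R]_12) (k : 'rV[R]_5).

(* Indices are 0-based: [label x n] is the label of a_(n+1), [coef k j] is k_(j+1). *)
Local Notation label x n := (x 0 (@inord 11 n)).
Local Notation coef k j := (k 0 (@inord 4 j)).

Lemma in_SR_vertex_sums x : in_SR x -> exists s,
  [/\ label x 0 + label x 4 + label x 5 = s, label x 0 + label x 1 + label x 6 = s,
      label x 1 + label x 2 + label x 7 = s, label x 2 + label x 3 + label x 8 = s &
  [/\ label x 3 + label x 4 + label x 9 = s, label x 6 + label x 7 + label x 10 = s,
      label x 8 + label x 10 + label x 11 = s & label x 5 + label x 9 + label x 11 = s]].
Proof.
case=> s sum_s; exists s.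
have vertex_sum v : (v < 8)%N -> \sum_(0 <= i < 12)
    (let e := nth (0%N, 0%N) G3_edges i in
     if (v.+1 == e.1) || (v.+1 == e.2) then label x i else 0) = s.
  move=> lt_v8; rewrite -(sum_s (inord v)) (big_mkcond (incident _)) big_mknat.
  by apply: eq_big_nat => i /andP[_ lt_i12]; rewrite /incident !inordK.
move: (vertex_sum 0%N isT) (vertex_sum 1%N isT) (vertex_sum 2%N isT) (vertex_sum 3%N isT)
      (vertex_sum 4%N isT) (vertex_sum 5%N isT) (vertex_sum 6%N isT) (vertex_sum 7%N isT).
rewrite unlock /= => v1 v2 v3 v4 v5 v6 v7 v8.
by split; [lra | lra | lra | lra | split; lra].
Qed.

Definition comb_entries k : seq R :=
  [:: coef k 0; coef k 1 + coef k 3 + coef k 4; coef k 0 + coef k 2 + coef k 4;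
      coef k 1; coef k 2 + coef k 3 + coef k 4; coef k 1 + coef k 3 + coef k 4;
      coef k 2 + coef k 3 + coef k 4; coef k 3; 2 * coef k 3 + coef k 4;
      coef k 0 + coef k 3 + coef k 4; coef k 0 + coef k 1 + coef k 4; coef k 2].

Lemma combE k i : comb k 0 i = (comb_entries k)`_i.
Proof.
have -> : comb k 0 i =
    \sum_(0 <= j < 5) coef k j * (nth 0%N (nth [::] gamma_coeffs j) i)%:R.
  rewrite summxE big_mknat; apply: eq_big_nat => j /andP[_ lt_j5].
  by rewrite !mxE inordK.
rewrite unlock /=.
by case: i => -[|[|[|[|[|[|[|[|[|[|[|[|//]]]]]]]]]]]] _ /=; lra.
Qed.

Lemma comb_label k n : (n < 12)%N -> label (comb k) n = (comb_entries k)`_n.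
Proof. by move=> lt_n12; rewrite combE inordK. Qed.

Definition coords x : 'rV[R]_5 :=
  \row_(j < 5) [:: label x 0; label x 3; label x 11; label x 7;
                   label x 8 - 2 * label x 7]`_j.

Lemma coords_comb k : coords (comb k) = k.
Proof.
apply/rowP => j; rewrite mxE -[in RHS](inord_val j).
case: j => -[|[|[|[|[|//]]]]] _ /=; rewrite !comb_label //=; lra.
Qed.

Lemma comb_coords x : in_SR x -> comb (coords x) = x.
Proof.
case/in_SR_vertex_sums=> s [v1 v2 v3 v4 [v5 v6 v7 v8]].
apply/rowP => i; rewrite combE -[in RHS](inord_val i).
by case: i => -[|[|[|[|[|[|[|[|[|[|[|[|//]]]]]]]]]]]] ?; rewrite /= !mxE !inordK //=; lra.
Qed.

Lemma comb_nat k : (forall i, comb k 0 i \is a Num.nat) <->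
  coef k 0 \is a Num.nat /\ coef k 1 \is a Num.nat /\ coef k 2 \is a Num.nat /\
  coef k 3 \is a Num.nat /\ coef k 0 + coef k 1 + coef k 4 \is a Num.nat /\
  coef k 0 + coef k 2 + coef k 4 \is a Num.nat /\
  coef k 0 + coef k 3 + coef k 4 \is a Num.nat /\
  coef k 1 + coef k 3 + coef k 4 \is a Num.nat /\
  coef k 2 + coef k 3 + coef k 4 \is a Num.nat /\ 2 * coef k 3 + coef k 4 \is a Num.nat.
Proof.
split=> [nat_comb | [? [? [? [? [? [? [? [? [? ?]]]]]]]]] i].
  have nat_entry n : (n < 12)%N -> (comb_entries k)`_n \is a Num.nat.
    by move=> lt_n12; rewrite -comb_label.
  exact: (conj (nat_entry 0%N isT) (conj (nat_entry 3%N isT)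
    (conj (nat_entry 11%N isT) (conj (nat_entry 7%N isT) (conj (nat_entry 10%N isT)
    (conj (nat_entry 2%N isT) (conj (nat_entry 9%N isT) (conj (nat_entry 1%N isT)
    (conj (nat_entry 4%N isT) (nat_entry 8%N isT)))))))))).
by rewrite combE; case: i => -[|[|[|[|[|[|[|[|[|[|[|[|//]]]]]]]]]]]].
Qed.

Lemma coords_int x : (forall i, x 0 i \is a Num.nat) ->
  forall j, coords x 0 j \is a Num.int.
Proof.
move=> nat_x j; have int_x i : x 0 i \is a Num.int by apply/intr_nat/nat_x.
rewrite mxE; case: j => -[|[|[|[|[|//]]]]] _ //=.
by rewrite rpredB ?rpredM ?int_x ?natr_int.
Qed.

End MagicLabellingsOfG3.

Theorem mainTheorem5 (R : realType) :
  (forall g : 'rV[R]_12, in_SR g -> exists! k : 'rV[R]_5, g = comb k) /\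
  (forall (g : 'rV[R]_12) (k : 'rV[R]_5), in_SR g -> g = comb k ->
     let k1 := k 0 0 in let k2 := k 0 1 in let k3 := k 0 2 in
     let k4 := k 0 3 in let k5 := k 0 4 in
     (in_S g <->
       (k1 \is a Num.nat /\ k2 \is a Num.nat /\ k3 \is a Num.nat /\
        k4 \is a Num.nat /\ k1 + k2 + k5 \is a Num.nat /\
        k1 + k3 + k5 \is a Num.nat /\ k1 + k4 + k5 \is a Num.nat /\
        k2 + k4 + k5 \is a Num.nat /\ k3 + k4 + k5 \is a Num.nat /\
        2 * k4 + k5 \is a Num.nat))) /\
  (forall (g : 'rV[R]_12) (k : 'rV[R]_5), in_S g -> g = comb k ->
     k 0 4 \is a Num.int).
Proof.
have [-> -> -> -> ->] := ord5_inord.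
split; [|split].
- move=> g SRg; exists (coords g); split; first by rewrite comb_coords.
  by move=> k ->; rewrite coords_comb.
- move=> g k SRg gE /=; apply: iff_trans (comb_nat k); rewrite -gE.
  by split=> [[] // | nat_g]; split.
- move=> g k [_ nat_g] gE.
  by rewrite -(coords_comb k) -gE coords_int.
Qed.
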